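(* Let $p$ be a prime and $q=1/p$. For integers $n\ge1$, $\mu\ge1$, let $P(n,p^\mu)$ be the probability that a random symmetric $n\times n$ matrix over $\mathbf{Z}_{p^\mu}$ has determinant $\not\equiv 0\pmod{p^\mu}$, and extend this by the boundary conditions $P(0,p^\mu)=1$ for $\mu>0$ and $P(n,p^\mu)=0$ for $\mu\le 0$ (all $n\ge 0$). Then for all $n>0$ and $\mu>0$, $$P(n,p^\mu)=(1-q)P(n-1,p^\mu)+q(1-q^{n-1})P(n-2,p^\mu)+q^n(1-q)P(n-1,p^{\mu-1})+q^{n+1}P(n,p^{\mu-2}),$$ where for $n=1$ the second term (whose coefficient $q(1-q^{0})$ vanishes) is taken to be $0$.
   Context: For a positive integer $m$, $\mathbf{Z}_m=\{1,2,\ldots,m\}$ (viewed as residues mod $m$). A random symmetric $n\times n$ matrix over $\mathbf{Z}_m$ is one whose entries $a_{ij}$, $i\le j$, are chosen independently and uniformly from $\mathbf{Z}_m$, with $a_{ji}=a_{ij}$. *)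

From HB Require Import structures.
From mathcomp Require Import all_boot all_order all_algebra.
Set Implicit Arguments. Unset Strict Implicit. Unset Printing Implicit Defensive.
Import Order.TTheory GRing.Theory Num.Theory.
Local Open Scope ring_scope.

(* Uniform choice of the entries
   a_ij (i <= j) is the same as the uniform distribution on the finite set
   of symmetric matrices, so the probability is a ratio of cardinalities. *)
Definition symP (m n : nat) : rat :=
  (#|[set A : 'M['Z_m]_n | (A^T == A) && (\det A != 0)]|)%:R /
  (#|[set A : 'M['Z_m]_n | A^T == A]|)%:R.

(* P(n, p^mu) with the boundary convention P(n, p^mu) = 0 for mu <= 0.
   (P(0, p^mu) = 1 for mu > 0 holds automatically: det of 0x0 matrix is 1.) *)
Definition Pdet (p n : nat) (mu : int) : rat :=
  match mu with
  | Posz k => if k is 0%N then 0 else symP (p ^ k) n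
  | Negz _ => 0
  end.

(* Split a symmetric matrix of size N over Z/p^mu as [[a, r], [r^T, D]] and count
   the D making the determinant nonzero modulo p^k.  If a is a unit, the Schur
   complement D - r^T a^-1 r runs over all symmetric matrices of size N - 1.  If a is
   not a unit but some entry of r is, a permutation brings it next to a, and the
   invertible 2 x 2 corner leaves size N - 2.  If p divides a and r, pulling p out of
   the first row and column lowers the precision: a = p u with u a unit leaves size
   N - 1 modulo p^(k-1), and a = p^2 b leaves size N modulo p^(k-2).  Since the
   recursion obtained for these counts inside Z/p^mu, and its boundary values, do not
   involve mu, the proportion for precision k is the same in every Z/p^mu with
   k <= mu, in particular in Z/p^k. *)

From mathcomp Require Import all_boot all_order all_algebra.
From mathcomp Require Import fingroup perm zify.
From mathcomp.algebra_tactics Require Import ring.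
Set Implicit Arguments. Unset Strict Implicit. Unset Printing Implicit Defensive.
Import Order.TTheory GRing.Theory Num.Theory.
Local Open Scope ring_scope.

Lemma det_block_schur (R : comUnitRingType) k l (X : 'M[R]_k) (Y : 'M[R]_(k, l))
    (W : 'M[R]_(l, k)) (Z : 'M[R]_l) : X \in unitmx ->
  \det (block_mx X Y W Z) = \det X * \det (Z - W *m invmx X *m Y).
Proof.
move=> uX.
have -> : block_mx X Y W Z =
    block_mx 1%:M 0 (W *m invmx X) 1%:M *m block_mx X Y 0 (Z - W *m invmx X *m Y).
  rewrite mulmx_block !mul1mx !mul0mx !addr0 -mulmxA mulVmx // mulmx1.
  by rewrite addrC subrK.
by rewrite det_mulmx det_lblock det_ublock !det1 !mul1r.
Qed.

Lemma det_block_mx11 (R : comNzRingType) (a b c d : R) :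
  \det (block_mx a%:M b%:M c%:M d%:M : 'M_(1 + 1)) = a * d - b * c.
Proof.
have det2 (A : 'M[R]_(1 + 1)) : \det A = A 0 0 * A 1 1 - A 0 1 * A 1 0.
  rewrite (expand_det_row _ 0) !big_ord_recl big_ord0 addr0 /cofactor !det_mx11 !mxE /=.
  have lift0 (i : 'I_(1 + 1)) (j : 'I_1) : lift i j = (if val i == 0%N then 1 else 0).
    by apply/val_inj; case: i => [[|[|]]] //= _; rewrite (ord1 j).
  by rewrite !lift0 /= expr0 expr1 mul1r mulN1r mulrN.
rewrite det2.
have -> : (0 : 'I_(1 + 1)) = lshift 1 0 by apply/val_inj.
have -> : (1 : 'I_(1 + 1)) = rshift 1 0 by apply/val_inj.
by rewrite block_mxEul block_mxEur block_mxEdl block_mxEdr !mxE !mulr1n.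
Qed.

Lemma sym_block_mx (T : Type) k l (X : 'M[T]_k) (Y : 'M[T]_(k, l)) (Z : 'M[T]_l) :
  (block_mx X Y Y^T Z)^T = block_mx X Y Y^T Z <-> X^T = X /\ Z^T = Z.
Proof.
rewrite tr_block_mx trmxK; split; first by case/eq_block_mx => -> _ _ ->.
by case=> -> ->.
Qed.

Lemma sum_sym_block (T : finType) (V : nmodType) k l (F : 'M[T]_(k + l) -> V) :
  \sum_(A : 'M[T]_(k + l) | A^T == A) F A =
  \sum_(X : 'M[T]_k | X^T == X) \sum_(Y : 'M[T]_(k, l))
    \sum_(Z : 'M[T]_l | Z^T == Z) F (block_mx X Y Y^T Z).
Proof.
pose blk (t : 'M[T]_k * ('M[T]_(k, l) * 'M[T]_l)) := block_mx t.1 t.2.1 t.2.1^T t.2.2.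
rewrite (reindex blk) /=; last first.
  exists (fun A => (ulsubmx A, (ursubmx A, drsubmx A))) => [[X [Y Z]] _ |A].
    by rewrite /blk /= block_mxKul block_mxKur block_mxKdr.
  by rewrite inE => /eqP sA; rewrite /blk /= -[RHS]submxK trmx_ursub sA.
under [RHS]eq_bigr do rewrite pair_big.
rewrite [RHS]pair_big /=; apply: eq_bigl => -[X [Y Z]] /=.
by apply/eqP/andP => [/sym_block_mx [-> ->] | [/eqP ? /eqP ?]] //; apply/sym_block_mx.
Qed.

Section SymmetricRingSums.
Variables (R : finComUnitRingType) (V : nmodType).

Lemma sum_sym_mx1 (F : 'M[R]_1 -> V) :
  \sum_(X : 'M[R]_1 | X^T == X) F X = \sum_(a : R) F a%:M.
Proof.
rewrite (eq_bigl xpredT) => [|X]; last by rewrite [X]mx11_scalar tr_scalar_mx eqxx.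
rewrite (reindex (fun a : R => a%:M)) //.
by exists (fun X : 'M[R]_1 => X 0 0) => [a _|X _]; rewrite ?mxE ?mulr1n // -mx11_scalar.
Qed.

Lemma sum_sym_congr n (P : 'M[R]_n) (F : 'M[R]_n -> V) : P \in unitmx ->
  \sum_(D : 'M[R]_n | D^T == D) F (P^T *m D *m P) = \sum_(D : 'M[R]_n | D^T == D) F D.
Proof.
move=> uP; have uPt : P^T \in unitmx by rewrite unitmx_tr.
have congrK D : (invmx P)^T *m (P^T *m D *m P) *m invmx P = D.
  by rewrite trmx_inv !mulmxA mulVmx // mul1mx -mulmxA mulmxV // mulmx1.
rewrite [RHS](reindex (fun D => P^T *m D *m P)) /=; last first.
  exists (fun D => (invmx P)^T *m D *m invmx P) => D _ //.
  by rewrite trmx_inv !mulmxA mulmxV // mul1mx -mulmxA mulVmx // mulmx1.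
apply: eq_bigl => D; rewrite !trmx_mul trmxK mulmxA.
apply/eqP/eqP => [-> //|sD].
by rewrite -[LHS]congrK sD congrK.
Qed.

Lemma sum_sym_addr n (C : 'M[R]_n) (F : 'M[R]_n -> V) : C^T = C ->
  \sum_(D : 'M[R]_n | D^T == D) F (D + C) = \sum_(D : 'M[R]_n | D^T == D) F D.
Proof.
move=> sC; rewrite [RHS](reindex (+%R^~ C)) /=; last first.
  by exists (fun D => D - C) => D _; rewrite ?addrK ?subrK.
by apply: eq_bigl => D; rewrite linearD /= sC (inj_eq (addIr C)).
Qed.

End SymmetricRingSums.

Lemma sum_comp_additive (U W : finZmodType) (V : nmodType) (f : U -> W) (P : pred W)
    (F : W -> V) : {morph f : x y / x + y} ->
  (forall x, P (f x)) -> (forall y, P y -> exists x, f x = y) ->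
  \sum_x F (f x) = (\sum_(y | P y) F y) *+ #|[set x | f x == 0]|.
Proof.
move=> fD Pf fP; rewrite (partition_big f P) //= -sumrMnl; apply: eq_bigr => y Py.
have [x0 <-] := fP y Py.
have fB x1 x2 : f (x1 - x2) = f x1 - f x2.
  by apply: (addIr (f x2)); rewrite -fD !subrK.
have -> : [set x | f x == 0] = (+%R^~ (- x0)) @: [set x | f x == f x0].
  apply/setP => x; rewrite inE; apply/eqP/imsetP => [fx0|[z]].
    by exists (x + x0); rewrite ?inE ?fD ?fx0 ?add0r ?addrK.
  by rewrite inE => /eqP fz ->; rewrite fB fz subrr.
rewrite card_imset; last exact: addIr.
rewrite -sumr_const; apply: eq_big => [x|x /eqP -> //]; by rewrite inE.
Qed.

Lemma dvdn_modm d m k : (d %| m)%N -> (d %| k %% m)%N = (d %| k)%N.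
Proof. by move=> dm; rewrite /dvdn (modn_dvdm _ dm). Qed.

Lemma det_castmx (R : comNzRingType) n1 n2 (e : n1 = n2) (A : 'M[R]_n1) :
  \det (castmx (e, e) A) = \det A.
Proof. by case: n2 / e; rewrite castmx_id. Qed.

Section PrimePowerResidues.
Variables (p mu : nat).
Hypotheses (p_pr : prime p) (mu_gt0 : (0 < mu)%N).
Local Notation m := (p ^ mu)%N.
Local Notation R := 'Z_(p ^ mu).

Lemma m_gt1 : (1 < m)%N.
Proof. by rewrite -(expn0 p) ltn_exp2l ?prime_gt1. Qed.

Lemma card_Zpm : #|R| = m.
Proof. by rewrite card_ord Zp_cast ?m_gt1. Qed.

Lemma val_Zpm_mul (x y : R) : val (x * y) = (val x * val y %% m)%N.
Proof. by rewrite /= [X in (_ %% X)%N](Zp_cast m_gt1). Qed.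

Lemma val_Zpm_nat k : val (k%:R : R) = (k %% m)%N.
Proof. exact: val_Zp_nat m_gt1 k. Qed.

Lemma val_Zpm_lt (x : R) : (val x < m)%N.
Proof. by rewrite -[X in (_ < X)%N]card_Zpm card_ord ltn_ord. Qed.

(* For [k <= mu], [nz_mod k (\det A)] says that [A] reduced modulo [p ^ k] is
   nonsingular; this lets all the levels [p ^ k] be counted inside one ring. *)
Definition nz_mod k (x : R) : bool := ~~ (p ^ k %| val x)%N.

Lemma nz_mod0 x : nz_mod 0 x = false.
Proof. by rewrite /nz_mod expn0 dvd1n. Qed.

Lemma nz_mod1 k : (0 < k)%N -> nz_mod k 1.
Proof.
move=> k_gt0; rewrite /nz_mod -[1]/(1%:R) val_Zpm_nat modn_small ?m_gt1 // dvdn1.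
by rewrite -(expn0 p) eqn_exp2l ?prime_gt1 // -lt0n.
Qed.

Lemma nz_mod_mu x : nz_mod mu x = (x != 0).
Proof. by rewrite /nz_mod /dvdn modn_small ?val_Zpm_lt. Qed.

Lemma unit_Zpm x : (x \is a GRing.unit) = nz_mod 1 x.
Proof.
rewrite -{1}[x]natr_Zp unitZpE ?m_gt1 // coprime_pexpl //.
by rewrite prime_coprime // /nz_mod expn1.
Qed.

Lemma nz_modMl k u x : (k <= mu)%N -> u \is a GRing.unit -> nz_mod k (u * x) = nz_mod k x.
Proof.
move=> k_le; rewrite unit_Zpm /nz_mod expn1 val_Zpm_mul dvdn_modm ?dvdn_exp2l // => pNu.
by rewrite Gauss_dvdr // coprimeXl // prime_coprime.
Qed.

Lemma nz_modMp k x : (k <= mu)%N -> nz_mod k (p%:R * x) = nz_mod k.-1 x.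
Proof.
move=> k_le; rewrite /nz_mod val_Zpm_mul val_Zpm_nat modnMml dvdn_modm ?dvdn_exp2l //.
by case: k k_le => [|k] _; rewrite ?expn0 ?dvd1n // expnS dvdn_pmul2l ?prime_gt0.
Qed.

Lemma nonunit_mulp (x : R) : p%:R * x \isn't a GRing.unit.
Proof. by rewrite unit_Zpm nz_modMp // nz_mod0. Qed.

Lemma nonunitP (y : R) : y \isn't a GRing.unit -> y = p%:R * (val y %/ p)%:R.
Proof.
by rewrite unit_Zpm negbK expn1 => py; rewrite -natrM mulnC divnK // natr_Zp.
Qed.

Lemma nonunitD (x y : R) : x \isn't a GRing.unit -> y \isn't a GRing.unit ->
  x + y \isn't a GRing.unit.
Proof. by move=> /nonunitP -> /nonunitP ->; rewrite -mulrDr nonunit_mulp. Qed.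

Lemma unit_det2 (a c d : R) : a \isn't a GRing.unit -> c \is a GRing.unit ->
  a * d - c * c \is a GRing.unit.
Proof.
move=> Na Uc; apply: contraT => Nu.
have Nad : a * d \isn't a GRing.unit by rewrite (nonunitP Na) -mulrA nonunit_mulp.
have : c * c \isn't a GRing.unit.
  by rewrite -[c * c](subKr (a * d)) nonunitD // unitrN.
by rewrite unitrM Uc.
Qed.

Lemma card_ker_mulp : #|[set x : R | p%:R * x == 0]| = p.
Proof.
set d := (p ^ mu.-1)%N.
have m_pd : m = (p * d)%N by rewrite -expnS prednK.
have d_gt0 : (0 < d)%N by rewrite expn_gt0 prime_gt0.
have lt_m i : (i < p)%N -> (i * d < m)%N by rewrite m_pd ltn_pmul2r.
have -> : [set x : R | p%:R * x == 0] = [set ((val i * d)%:R : R) | i : 'I_p].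
  apply/setP => x; rewrite inE -[_ == 0]negbK -nz_mod_mu nz_modMp // negbK.
  apply/idP/imsetP => [dx|[i _ ->]]; last first.
    by rewrite val_Zpm_nat modn_small ?(lt_m _ (ltn_ord i)) ?dvdn_mull.
  have lt_xp : (val x %/ d < p)%N by rewrite ltn_divLR // -m_pd val_Zpm_lt.
  by exists (Ordinal lt_xp); rewrite //= divnK // natr_Zp.
rewrite card_imset ?card_ord // => i j /(congr1 val).
rewrite !val_Zpm_nat !modn_small ?(lt_m _ (ltn_ord _)) // => /eqP.
by rewrite eqn_pmul2r // => /eqP/val_inj.
Qed.

Lemma sum_mulp (V : nmodType) (F : R -> V) :
  \sum_(x : R) F (p%:R * x) = (\sum_(y | y \isn't a GRing.unit) F y) *+ p.
Proof.
rewrite -[X in _ = _ *+ X]card_ker_mulp; apply: sum_comp_additive => [x y|x|y /nonunitP ->].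
- exact: mulrDr.
- exact: nonunit_mulp.
- by eexists.
Qed.

Definition nonunit_row n (r : 'rV[R]_n) : bool := [forall j, r 0 j \isn't a GRing.unit].

Lemma card_ker_mulp_row n : #|[set r : 'rV[R]_n | p%:R *: r == 0]| = (p ^ n)%N.
Proof.
set K := [set x : R | p%:R * x == 0].
have row_inj : injective (fun f : {ffun 'I_n -> R} => \row_j f j).
  by move=> f g /rowP fg; apply/ffunP => j; have := fg j; rewrite !mxE.
have -> : [set r : 'rV[R]_n | p%:R *: r == 0] =
    (fun f : {ffun 'I_n -> R} => \row_j f j) @: [set f | f \in ffun_on K].
  apply/setP => r; rewrite inE; apply/eqP/imsetP => [/rowP pr0|[f]].
    exists [ffun j => r 0 j]; last by apply/rowP => j; rewrite !mxE ffunE.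
    by rewrite inE; apply/ffun_onP => j; rewrite ffunE inE; have := pr0 j; rewrite !mxE => ->.
  rewrite inE => /ffun_onP fK ->; apply/rowP => j; rewrite !mxE.
  by have := fK j; rewrite inE => /eqP.
by rewrite card_imset // cardsE card_ffun_on card_ker_mulp card_ord.
Qed.

Lemma sum_mulp_row (V : nmodType) n (F : 'rV[R]_n -> V) :
  \sum_(r : 'rV[R]_n) F (p%:R *: r) = (\sum_(y | nonunit_row y) F y) *+ (p ^ n).
Proof.
rewrite -[X in _ = _ *+ X]card_ker_mulp_row; apply: sum_comp_additive => [r s|r|y /forallP Ny].
- exact: scalerDr.
- by apply/forallP => j; rewrite mxE nonunit_mulp.
- exists (\row_j ((val (y 0 j) %/ p)%:R : R)).
  by apply/rowP => j; rewrite !mxE -nonunitP.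
Qed.

Local Notation q := (p%:R^-1 : rat).

Lemma p_neq0 : (p%:R : rat) != 0.
Proof. by rewrite pnatr_eq0 -lt0n prime_gt0. Qed.

Lemma sum_const_Zpm (c : rat) : \sum_(a : R) c = m%:R * c.
Proof. by rewrite sumr_const card_Zpm mulr_natl. Qed.

Lemma sum_const_row n (c : rat) : \sum_(r : 'rV[R]_n) c = m%:R ^+ n * c.
Proof. by rewrite sumr_const card_mx card_Zpm mul1n -natrX mulr_natl. Qed.

Lemma sum_nonunit_const (c : rat) : \sum_(a : R | a \isn't a GRing.unit) c = m%:R * q * c.
Proof.
apply: (mulIf p_neq0); rewrite [LHS]mulr_natr -(sum_mulp (fun=> c)) sum_const_Zpm.
by field; rewrite p_neq0.
Qed.

Lemma sum_unit_const (c : rat) : \sum_(a : R | a \is a GRing.unit) c = m%:R * (1 - q) * c.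
Proof.
have := sum_const_Zpm c.
rewrite (bigID (fun a : R => a \is a GRing.unit)) /= sum_nonunit_const => split_units.
by apply: (addIr (m%:R * q * c)); rewrite split_units; ring.
Qed.

Lemma sum_nonunit_row_const n (c : rat) :
  \sum_(r : 'rV[R]_n | nonunit_row r) c = (m%:R * q) ^+ n * c.
Proof.
have pn_neq0 : (p%:R ^+ n : rat) != 0 by rewrite expf_neq0 ?p_neq0.
apply: (mulIf pn_neq0); rewrite -natrX [LHS]mulr_natr -(sum_mulp_row (fun=> c)).
by rewrite sum_const_row !natrX expr_div_n mulrAC divfK.
Qed.

Definition nsym k n : rat :=
  \sum_(A : 'M[R]_n | A^T == A) (nz_mod k (\det A) : nat)%:R.

Definition nsym_border k n (a : R) (r : 'rV[R]_n) : rat :=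
  \sum_(D : 'M[R]_n | D^T == D) (nz_mod k (\det (block_mx a%:M r r^T D)) : nat)%:R.

Definition nsym_total n : rat := \sum_(A : 'M[R]_n | A^T == A) 1.

Lemma nsym_split k n : nsym k n.+1 = \sum_(a : R) \sum_(r : 'rV[R]_n) nsym_border k a r.
Proof. by rewrite /nsym (sum_sym_block (k := 1)) sum_sym_mx1. Qed.

Lemma nsym_total_split n : nsym_total n.+1 = m%:R ^+ n.+1 * nsym_total n.
Proof.
rewrite /nsym_total (sum_sym_block (k := 1)) sum_sym_mx1 sum_const_Zpm.
by rewrite sum_const_row mulrA -exprS.
Qed.

Lemma nsym_total_neq0 n : nsym_total n != 0.
Proof.
rewrite /nsym_total sumr_const pnatr_eq0 -lt0n.
by apply/card_gt0P; exists 0; apply/eqP; rewrite trmx0.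
Qed.

Lemma tr_mulmx_invmx_sym l l' (X : 'M[R]_l) (Y : 'M[R]_(l, l')) : X^T = X ->
  (Y^T *m invmx X *m Y)^T = Y^T *m invmx X *m Y.
Proof. by move=> sX; rewrite !trmx_mul trmxK trmx_inv sX mulmxA. Qed.

Lemma sum_sym_schur k l l' (X : 'M[R]_l) (Y : 'M[R]_(l, l')) (W : 'M[R]_(l', l)) :
    (k <= mu)%N -> X \in unitmx -> (W *m invmx X *m Y)^T = W *m invmx X *m Y ->
  \sum_(D : 'M[R]_l' | D^T == D) (nz_mod k (\det (block_mx X Y W D)) : nat)%:R
  = nsym k l'.
Proof.
move=> k_le uX sC.
under eq_bigr => D _ do rewrite det_block_schur // nz_modMl -?unitmxE //.
by apply: (sum_sym_addr (fun D => (nz_mod k (\det D) : nat)%:R)); rewrite linearN /= sC.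
Qed.

Lemma nsym_border_unit k n a (r : 'rV[R]_n) : (k <= mu)%N -> a \is a GRing.unit ->
  nsym_border k a r = nsym k n.
Proof.
move=> k_le Ua; apply: sum_sym_schur; rewrite ?tr_mulmx_invmx_sym ?tr_scalar_mx //.
by rewrite unitmxE det_scalar1.
Qed.

Lemma nsym_border_mulmx k n a (r : 'rV[R]_n) (P : 'M[R]_n) : (k <= mu)%N ->
  P \in unitmx -> nsym_border k a (r *m P) = nsym_border k a r.
Proof.
move=> k_le uP; rewrite /nsym_border -(sum_sym_congr _ uP); apply: eq_bigr => D _.
pose Q : 'M[R]_(1 + n) := block_mx 1%:M 0 0 P.
have -> : block_mx a%:M (r *m P) (r *m P)^T (P^T *m D *m P) =
    Q^T *m block_mx a%:M r r^T D *m Q.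
  rewrite /Q tr_block_mx tr_scalar_mx !trmx0 !mulmx_block trmx_mul.
  by rewrite !mul0mx !mulmx0 !addr0 !add0r !mul_scalar_mx !scale1r !mulmx1.
rewrite !det_mulmx det_tr det_ublock det1 mul1r mulrC mulrA nz_modMl //.
by rewrite unitrM -unitmxE uP.
Qed.

Lemma nsym_border_unit_head k n a (r : 'rV[R]_(1 + n)) : (k <= mu)%N ->
    a \isn't a GRing.unit -> r 0 0 \is a GRing.unit ->
  nsym_border k a r = m%:R ^+ n.+1 * nsym k n.
Proof.
move=> k_le Na Uc; rewrite /nsym_border (sum_sym_block (k := 1)) sum_sym_mx1.
rewrite exprS -mulrA -sum_const_Zpm; apply: eq_bigr => d _.
rewrite -sum_const_row; apply: eq_bigr => e _.
set c := r 0 0; set r2 := rsubmx r.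
have r_split : r = row_mx c%:M r2.
  rewrite -[r in LHS]hsubmxK [lsubmx r]mx11_scalar mxE; congr (row_mx _%:M _).
  by congr (r _ _); apply: val_inj.
pose X : 'M[R]_(1 + 1) := block_mx a%:M c%:M c%:M d%:M.
have sX : X^T = X by rewrite /X tr_block_mx !tr_scalar_mx.
have uX : X \in unitmx by rewrite unitmxE det_block_mx11 unit_det2.
rewrite -(sum_sym_schur k_le uX (tr_mulmx_invmx_sym (col_mx r2 e) sX)).
apply: eq_bigr => D _.
rewrite r_split tr_row_mx tr_scalar_mx tr_col_mx.
by rewrite (@block_mxA R 1 1 n 1 1 n a%:M c%:M r2 c%:M d%:M e r2^T e^T D) det_castmx.
Qed.

Lemma nsym_border_unit_entry k n a (r : 'rV[R]_n.+1) : (k <= mu)%N ->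
    a \isn't a GRing.unit -> ~~ nonunit_row r ->
  nsym_border k a r = m%:R ^+ n.+1 * nsym k n.
Proof.
move=> k_le Na; rewrite negb_forall => /existsP [j /negPn Uj].
have uP : (perm_mx (tperm 0 j) : 'M[R]_n.+1) \in unitmx.
  by rewrite unitmxE det_perm unitrX ?unitrN1.
rewrite -(nsym_border_mulmx a r k_le uP) nsym_border_unit_head //.
have -> : r *m perm_mx (tperm 0 j) = col_perm (tperm 0 j) r by rewrite col_permE tpermV.
by rewrite mxE tpermL.
Qed.

Lemma nsym_border_mulp k n a (r : 'rV[R]_n) : (k <= mu)%N -> a \is a GRing.unit ->
  nsym_border k (p%:R * a) (p%:R *: r) = nsym k.-1 n.
Proof.
move=> k_le Ua.
have uA : (a%:M : 'M[R]_1) \in unitmx by rewrite unitmxE det_scalar1.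
have sC : ((p%:R *: r)^T *m invmx a%:M *m r)^T = (p%:R *: r)^T *m invmx a%:M *m r.
  by rewrite linearZ /= -!scalemxAl linearZ /= tr_mulmx_invmx_sym ?tr_scalar_mx.
rewrite -(sum_sym_schur (leq_trans (leq_pred k) k_le) uA sC).
apply: eq_bigr => D _; congr (_ : nat)%:R.
have -> : block_mx (p%:R * a)%:M (p%:R *: r) (p%:R *: r)^T D =
    block_mx (p%:R%:M : 'M[R]_1) 0 0 1%:M *m block_mx a%:M r (p%:R *: r)^T D.
  by rewrite mulmx_block !mul_scalar_mx !mul0mx !addr0 !add0r !scale1r scale_scalar_mx.
by rewrite det_mulmx det_ublock det_scalar1 det1 mulr1 nz_modMp.
Qed.

Lemma nsym_border_mulp2 k n b (r : 'rV[R]_n) : (k <= mu)%N ->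
  nsym_border k (p%:R * (p%:R * b)) (p%:R *: r) = nsym_border k.-2 b r.
Proof.
move=> k_le; apply: eq_bigr => D _; congr (_ : nat)%:R.
have -> : block_mx (p%:R * (p%:R * b))%:M (p%:R *: r) (p%:R *: r)^T D =
    block_mx p%:R%:M 0 0 1%:M *m block_mx b%:M r r^T D *m block_mx p%:R%:M 0 0 1%:M.
  rewrite !mulmx_block !mul_scalar_mx !mul_mx_scalar !mul0mx !mulmx0.
  by rewrite !addr0 !add0r !scale1r !scale_scalar_mx scaler0 add0r linearZ.
rewrite !det_mulmx det_ublock det_scalar1 det1 mulr1 mulrAC -mulrA.
by rewrite !nz_modMp // (leq_trans (leq_pred k)).
Qed.

Lemma sum_unit_row_const n (c : rat) :
  \sum_(r : 'rV[R]_n | ~~ nonunit_row r) c = (m%:R ^+ n - (m%:R * q) ^+ n) * c.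
Proof.
have := sum_const_row n c.
rewrite (bigID (@nonunit_row n)) /= sum_nonunit_row_const => split_rows.
by apply: (addrI ((m%:R * q) ^+ n * c)); rewrite split_rows; ring.
Qed.

Lemma sum_border_unit k n : (k <= mu)%N ->
  \sum_(a : R | a \is a GRing.unit) \sum_(r : 'rV[R]_n) nsym_border k a r
  = m%:R * (1 - q) * (m%:R ^+ n * nsym k n).
Proof.
move=> k_le; under eq_bigr => a Ua do under eq_bigr => r _ do rewrite nsym_border_unit //.
by rewrite (eq_bigr _ (fun _ _ => sum_const_row _ _)) sum_unit_const.
Qed.

Lemma sum_border_unit_entry k n : (k <= mu)%N ->
  \sum_(a : R | a \isn't a GRing.unit) \sum_(r : 'rV[R]_n.+1 | ~~ nonunit_row r)
    nsym_border k a r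
  = m%:R * q * ((m%:R ^+ n.+1 - (m%:R * q) ^+ n.+1) * (m%:R ^+ n.+1 * nsym k n)).
Proof.
move=> k_le; under eq_bigr => a Na do under eq_bigr => r Nr do
  rewrite nsym_border_unit_entry //.
by rewrite (eq_bigr _ (fun _ _ => sum_unit_row_const _ _)) sum_nonunit_const.
Qed.

Lemma sum_border_divisible k n : (k <= mu)%N ->
  \sum_(a : R | a \isn't a GRing.unit) \sum_(r : 'rV[R]_n | nonunit_row r)
    nsym_border k a r
  = m%:R ^+ n.+1 * (1 - q) * q ^+ n.+1 * nsym k.-1 n + q ^+ n.+2 * nsym k.-2 n.+1.
Proof.
move=> k_le; set T := \sum_(a | _) _.
(* Substitute a = p x and r = p s: every such (a, r) is hit p^(n+1) times.  Then
   either x is a unit, or x = p b is hit p more times. *)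
have scaled : T *+ (p ^ n) *+ p *+ p =
    (m%:R ^+ n * (m%:R * (1 - q) * nsym k.-1 n)) *+ p + nsym k.-2 n.+1.
  rewrite /T -sumrMnl.
  under eq_bigr => a _ do rewrite -(sum_mulp_row (nsym_border k a)).
  rewrite exchange_big /= -sumrMnl.
  under eq_bigr => r _ do rewrite -(sum_mulp (fun a => nsym_border k a (p%:R *: r))).
  rewrite -sumrMnl.
  under eq_bigr => r _ do rewrite (bigID (fun x => x \is a GRing.unit)) /= mulrnDl.
  rewrite big_split /=; congr (_ + _).
    under eq_bigr => r _ do under eq_bigr => x Ux do rewrite nsym_border_mulp //.
    by rewrite sumrMnl (eq_bigr _ (fun _ _ => sum_unit_const _)) sum_const_row.
  rewrite nsym_split exchange_big /=; apply: eq_bigr => r _.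
  rewrite -(sum_mulp (fun x => nsym_border k (p%:R * x) (p%:R *: r))).
  by apply: eq_bigr => b _; rewrite nsym_border_mulp2.
have pn2_neq0 : (p%:R ^+ n.+2 : rat) != 0 by rewrite expf_neq0 ?p_neq0.
apply: (mulIf pn2_neq0).
have -> : T * p%:R ^+ n.+2 = T *+ p ^ n *+ p *+ p.
  by rewrite !exprSr -natrX !mulrA !mulr_natr.
rewrite scaled -mulr_natr !exprVn !exprS.
by field; rewrite p_neq0 expf_neq0 ?p_neq0.
Qed.

Lemma nsym_rec k n : (k <= mu)%N ->
  nsym k n.+1 = m%:R * (1 - q) * (m%:R ^+ n * nsym k n)
    + (if n is n'.+1 then m%:R * q * ((m%:R ^+ n - (m%:R * q) ^+ n) * (m%:R ^+ n * nsym k n'))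
       else 0)
    + (m%:R ^+ n.+1 * (1 - q) * q ^+ n.+1 * nsym k.-1 n + q ^+ n.+2 * nsym k.-2 n.+1).
Proof.
move=> k_le; rewrite nsym_split (bigID (fun a : R => a \is a GRing.unit)) /=.
rewrite sum_border_unit // -addrA; congr (_ + _).
under eq_bigr => a _ do rewrite (bigID (@nonunit_row n)) /= addrC.
rewrite big_split /= sum_border_divisible //; congr (_ + _).
case: n => [|n]; last exact: sum_border_unit_entry.
by rewrite big1 // => a _; rewrite big_pred0 // => r; apply/negbTE/negPn/forallP => -[].
Qed.

Definition symfrac k n : rat := nsym k n / nsym_total n.

Lemma symfrac_rec k n : (k <= mu)%N ->
  symfrac k n.+1 = (1 - q) * symfrac k n
    + (if n is n'.+1 then q * (1 - q ^+ n) * symfrac k n' else 0)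
    + q ^+ n.+1 * (1 - q) * symfrac k.-1 n + q ^+ n.+2 * symfrac k.-2 n.+1.
Proof.
move=> k_le; rewrite /symfrac nsym_rec // !nsym_total_split.
have m_neq0 : (m%:R : rat) != 0 by rewrite pnatr_eq0 -lt0n expn_gt0 prime_gt0.
have p0 := p_neq0.
case: n => [|n]; last rewrite nsym_total_split.
all: rewrite ?exprMn ?exprS ?expr0 ?exprVn.
all: by field; rewrite ?expf_neq0 ?nsym_total_neq0 ?m_neq0 ?p0.
Qed.

Lemma symfrac_size0 k : (0 < k)%N -> symfrac k 0 = 1.
Proof.
move=> k_gt0; rewrite /symfrac /nsym /nsym_total.
by rewrite (eq_bigr (fun _ => 1)) ?divff ?nsym_total_neq0 // => A _; rewrite det_mx00 nz_mod1.
Qed.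

Lemma symfrac_level0 n : symfrac 0 n = 0.
Proof. by rewrite /symfrac /nsym big1 ?mul0r // => A _; rewrite nz_mod0. Qed.

End PrimePowerResidues.

Lemma sum_nat_indicator (R : pzSemiRingType) (T : finType) (P b : pred T) :
  \sum_(i | P i) ((b i : nat)%:R : R) = #|[set i | P i && b i]|%:R.
Proof.
rewrite -sumr_const big_mkcond [RHS]big_mkcond; apply: eq_bigr => i _.
by rewrite inE; case: (P i); case: (b i).
Qed.

Lemma symP_symfrac p k n : prime p -> (0 < k)%N -> symP (p ^ k) n = symfrac p k k n.
Proof.
move=> p_pr k_gt0; rewrite /symP /symfrac /nsym /nsym_total sumr_const.
under eq_bigr do rewrite nz_mod_mu //.
by rewrite sum_nat_indicator; congr (_%:R / _%:R); apply: eq_card => A; rewrite !inE.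
Qed.

Lemma symfrac_Pdet p mu k n : prime p -> (0 < mu)%N -> (k <= mu)%N ->
  symfrac p mu k n = Pdet p n k.
Proof.
move=> p_pr; elim/ltn_ind: k => k IHk in mu n *; elim/ltn_ind: n => n IHn in mu *.
move=> mu_gt0 k_le; case: k => [|k] in IHk IHn k_le *; first exact: symfrac_level0.
rewrite /= symP_symfrac //.
case: n => [|n] in IHn *; first by rewrite !symfrac_size0.
have lvl j n' nu : (j < k.+1)%N -> (0 < nu)%N -> (j <= nu)%N ->
    symfrac p nu j n' = Pdet p n' j.
  by move=> j_lt; apply: IHk.
rewrite (symfrac_rec p_pr mu_gt0 n k_le) (symfrac_rec p_pr (ltn0Sn k) n (leqnn _)) /=.
rewrite ?(lvl k) ?(lvl k.-1) ?(IHn n) //; try lia.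
by case: n IHn => [|n] IHn //; rewrite !IHn.
Qed.

Lemma Pdet_subz p n (k j : nat) : Pdet p n (k%:Z - j%:Z) = Pdet p n (k - j)%N.
Proof.
have [j_le|k_lt] := leqP j k; first by rewrite subzn.
have -> : k%:Z - j%:Z = Negz (j - k).-1 by rewrite NegzE; lia.
by move/ltnW: k_lt; rewrite -subn_eq0 => /eqP ->.
Qed.

Theorem theorem3p1 (p n : nat) (mu : int) :
  prime p -> (0 < n)%N -> 0 < mu ->
  let q : rat := (p%:R)^-1 in
  Pdet p n mu =
    (1 - q) * Pdet p n.-1 mu
    + (if (2 <= n)%N then q * (1 - q ^+ n.-1) * Pdet p (n - 2) mu else 0)
    + q ^+ n * (1 - q) * Pdet p n.-1 (mu - 1)
    + q ^+ n.+1 * Pdet p n (mu - 2).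
Proof.
move=> p_pr n_gt0 + q; case: mu => [k|//]; rewrite ltz_nat => k_gt0.
case: n n_gt0 => [//|n] _.
rewrite (Pdet_subz _ _ _ 1) (Pdet_subz _ _ _ 2) subn1 !subn2.
rewrite -!(symfrac_Pdet (mu := k) _ p_pr k_gt0) ?leq_pred ?(leq_trans (leq_pred _) (leq_pred _)) //.
rewrite (symfrac_rec p_pr k_gt0 n (leqnn k)) -/q.
by case: n.
Qed.
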